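(* Let $\mathbf{R}^{\mathrm{o}}$ be a finite set of obligations, $\mathbf{R}=(\emptyset,\mathbf{R}^{\mathrm{o}})$, fix a set $\Gamma$ of alethic formulas relative to which the overriding relation $\triangleright$ is computed, and let $M$ be a replete $\mathbf{R}$-ordered model. For every Boolean formula $a$ and world $w$ of $M$: if $w\models a$ and $w\models\bigvee_{H\in\mathit{maxf}(\mathbf{R}^{\mathrm{o}}_{\triangleright},a,\{a\})}\bigl(\bigwedge\mathrm{m}(H)\bigr)$, then $w\in\max_{\succeq_I}(\Vert a\Vert)$, with $out_4^{+}$ as the underlying I/O operation.
   Context: Boolean formulas over propositional letters; $\models_{\mathrm{PL}}$ classical entailment, $\models_{\mathrm{S5}}$ S5 entailment. An obligation is $\bigcirc(B/A)$ ($A,B$ Boolean) with body $b=A$, head $h=B$. Overriding: $r_j\triangleright r_i$ iff (i) $\{h(r_i),h(r_j)\}\cup\Gamma\models_{\mathrm{S5}}\bot$; (ii) $b(r_j)\models_{\mathrm{PL}}b(r_i)$ and $b(r_i)\not\models_{\mathrm{PL}}b(r_j)$; (iii) $\{h(r_i),b(r_j)\}\not\models_{\mathrm{PL}}\bot$. An $\mathbf{R}$-ordered model (no normality conditionals) is $(W,\succeq_N,\succeq_I,v)$ with $W\neq\emptyset$, valuation $v$, $\succeq_N=W\times W$, and $w_1\succeq_I w_2$ iff $V(w_1)\subseteq V(w_2)$, where $V(w)=\{r_i\in\mathbf{R}^{\mathrm{o}}:w\models b(r_i)\wedge\neg h(r_i)$ and $w\not\models b(r_j)$ for all $r_j\in\mathbf{R}^{\mathrm{o}}$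 with $r_j\triangleright r_i\}$. $\max_{\succeq_I}(X)=\{w\in X:\forall u\in X(u\succeq_I w\Rightarrow w\succeq_I u)\}$, $\Vert a\Vert$ the set of worlds where $a$ holds. Replete: every PL-consistent Boolean formula holds at some world. I/O: for a set $H$ of pairs of Boolean formulas, $\mathrm{m}(H)=\{a\rightarrow x:(a,x)\in H\}$ ($\bigwedge\mathrm{m}(\emptyset)=\top$), $out_4^{+}(H,a)=\{x:\{a\}\cup\mathrm{m}(H)\models_{\mathrm{PL}}x\}$; $\mathit{maxf}(N,a,C)$ is the set of $\subseteq$-maximal $H\subseteq N$ with $out_4^{+}(H,a)\cup C$ PL-consistent. Translation: for $r_i=\bigcirc(x/a)$, $D(r_i)=\{r_j\in\mathbf{R}^{\mathrm{o}}:r_j\triangleright r_i\}$, $r_i^{\triangleright}=(a\wedge\bigwedge_{r_j\in D(r_i)}\neg b(r_j),x)$ if $D(r_i)\neq\emptyset$, else $(a,x)$; $\mathbf{R}^{\mathrm{o}}_{\triangleright}=\{r^{\triangleright}:r\in\mathbf{R}^{\mathrm{o}}\}$. *)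

From Stdlib Require Import List ClassicalEpsilon.
Import ListNotations.
Set Implicit Arguments.

Definition valuation := nat -> bool.

Inductive form : Type :=
| FVar : nat -> form
| FTop : form
| FBot : form
| FNeg : form -> form
| FAnd : form -> form -> form
| FOr  : form -> form -> form
| FImp : form -> form -> form.

Fixpoint eval (v : valuation) (f : form) : Prop :=
  match f with
  | FVar n => v n = true
  | FTop => True
  | FBot => False
  | FNeg g => ~ eval v g
  | FAnd g h => eval v g /\ eval v h
  | FOr g h => eval v g \/ eval v h
  | FImp g h => eval v g -> eval v h
  end.

(* classical PL entailment between single formulas, from a set of premises,
   and PL-consistency of a set (= satisfiability, by soundness/completeness
   and compactness). *)
Definition pl_entails (A B : form) : Prop := forall v, eval v A -> eval v B.
Definition pl_entails_set (S : form -> Prop) (B : form) : Prop :=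
  forall v, (forall f, S f -> eval v f) -> eval v B.
Definition pl_consistent (S : form -> Prop) : Prop :=
  exists v, forall f, S f -> eval v f.

Inductive mform : Type :=
| MVar : nat -> mform
| MTop : mform
| MBot : mform
| MNeg : mform -> mform
| MAnd : mform -> mform -> mform
| MOr  : mform -> mform -> mform
| MImp : mform -> mform -> mform
| MBox : mform -> mform
| MDia : mform -> mform.

Fixpoint embed (f : form) : mform :=
  match f with
  | FVar n => MVar n
  | FTop => MTop
  | FBot => MBot
  | FNeg g => MNeg (embed g)
  | FAnd g h => MAnd (embed g) (embed h)
  | FOr g h => MOr (embed g) (embed h)
  | FImp g h => MImp (embed g) (embed h)
  end.

(* S5 model: universal accessibility on a nonempty set of worlds *)
Fixpoint msat (W : Type) (V : W -> valuation) (w : W) (f : mform) : Prop :=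
  match f with
  | MVar n => V w n = true
  | MTop => True
  | MBot => False
  | MNeg g => ~ msat V w g
  | MAnd g h => msat V w g /\ msat V w h
  | MOr g h => msat V w g \/ msat V w h
  | MImp g h => msat V w g -> msat V w h
  | MBox g => forall u, msat V u g
  | MDia g => exists u, msat V u g
  end.

Definition s5_inconsistent (S : mform -> Prop) : Prop :=
  forall (W : Type) (V : W -> valuation) (w : W),
    ~ (forall f, S f -> msat V w f).

(* Obligations O(B/A): body A, head B *)
Record oblig := Oblig { body : form; head : form }.

Definition overrides (Gamma : mform -> Prop) (rj ri : oblig) : Prop :=
  s5_inconsistent (fun f => f = embed (head ri) \/ f = embed (head rj) \/ Gamma f)
  /\ pl_entails (body rj) (body ri)
  /\ ~ pl_entails (body ri) (body rj)
  /\ ~ pl_entails_set (fun f => f = head ri \/ f = body rj) FBot.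

(* R-ordered model (no normality conditionals, so >=_N = W x W is omitted) *)
Record model := Model {
  world : Type;
  world_inhabited : inhabited world;
  val : world -> valuation }.

Definition wsat (M : model) (w : world M) (f : form) : Prop := eval (val M w) f.

Definition viol (Ro : list oblig) (Gamma : mform -> Prop) (M : model)
  (w : world M) (ri : oblig) : Prop :=
  In ri Ro /\ wsat M w (body ri) /\ ~ wsat M w (head ri)
  /\ forall rj, In rj Ro -> overrides Gamma rj ri -> ~ wsat M w (body rj).

Definition geI (Ro : list oblig) (Gamma : mform -> Prop) (M : model)
  (w1 w2 : world M) : Prop :=
  forall r, viol Ro Gamma M w1 r -> viol Ro Gamma M w2 r.

Definition max_I (Ro : list oblig) (Gamma : mform -> Prop) (M : model)
  (X : world M -> Prop) (w : world M) : Prop :=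
  X w /\ forall u, X u -> geI Ro Gamma M u w -> geI Ro Gamma M w u.

Definition replete (M : model) : Prop :=
  forall A : form, pl_consistent (fun f => f = A) -> exists w, wsat M w A.

Definition iopair := (form * form)%type.

Definition mset (H : iopair -> Prop) : form -> Prop :=
  fun f => exists p, H p /\ f = FImp (fst p) (snd p).

Definition out4p (H : iopair -> Prop) (a : form) : form -> Prop :=
  fun x => pl_entails_set (fun f => f = a \/ mset H f) x.

Definition maxf (N : iopair -> Prop) (a : form) (C : form -> Prop)
  (H : iopair -> Prop) : Prop :=
  (forall p, H p -> N p)
  /\ pl_consistent (fun f => out4p H a f \/ C f)
  /\ forall H' : iopair -> Prop,
       (forall p, H p -> H' p) -> (forall p, H' p -> N p) ->
       pl_consistent (fun f => out4p H' a f \/ C f) ->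
       forall p, H' p -> H p.

Definition Dset (Ro : list oblig) (Gamma : mform -> Prop) (ri : oblig) : list oblig :=
  filter (fun rj => if excluded_middle_informative (overrides Gamma rj ri)
                    then true else false) Ro.

Definition bigand (l : list form) : form :=
  match l with
  | [] => FTop
  | f :: l' => fold_left FAnd l' f
  end.

Definition translate (Ro : list oblig) (Gamma : mform -> Prop) (ri : oblig) : iopair :=
  match Dset Ro Gamma ri with
  | [] => (body ri, head ri)
  | D => (FAnd (body ri) (bigand (map (fun rj => FNeg (body rj)) D)), head ri)
  end.

Definition Ro_trans (Ro : list oblig) (Gamma : mform -> Prop) : iopair -> Prop :=
  fun p => exists r, In r Ro /\ p = translate Ro Gamma r.

(* A world u with V(u) ⊆ V(w) violates no pair of H (a violated translated pair at u would be a
   violation at u, hence at w, while w satisfies m(H)).  If some r ∈ V(w) were missing from V(u),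
   then u would satisfy a, m(H) and the translation of r, so by maximality that translation would
   already lie in H, contradicting the fact that w violates it while satisfying m(H). *)

From Pilot Require Import Defs.
From Stdlib Require Import List Classical ClassicalEpsilon.

Lemma eval_fold_left_FAnd v l f :
  eval v (fold_left FAnd l f) <-> eval v f /\ (forall g, In g l -> eval v g).
Proof.
  revert f; induction l as [|g l IH]; intro f; simpl.
  - split; [tauto | intros [Hf _]; exact Hf].
  - rewrite IH; simpl; split.
    + intros [[Hf Hg] Hl]; split; auto. intros g' [<- | Hg']; auto.
    + intros [Hf Hl]; auto.
Qed.

Lemma eval_bigand v l : eval v (bigand l) <-> (forall g, In g l -> eval v g).
Proof.
  destruct l as [|f l]; simpl.
  - split; auto. intros _ g [].
  - rewrite eval_fold_left_FAnd. split.
    + intros [Hf Hl] g [<- | Hg]; auto.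
    + auto.
Qed.

Lemma In_Dset Ro Gamma r rj :
  In rj (Dset Ro Gamma r) <-> In rj Ro /\ overrides Gamma rj r.
Proof.
  unfold Dset; rewrite filter_In.
  destruct (excluded_middle_informative (overrides Gamma rj r)); intuition congruence.
Qed.

Lemma eval_translate_body v Ro Gamma r :
  eval v (fst (translate Ro Gamma r)) <->
  eval v (body r) /\
  (forall rj, In rj Ro -> overrides Gamma rj r -> ~ eval v (body rj)).
Proof.
  unfold translate.
  destruct (Dset Ro Gamma r) as [|d D] eqn:ED; cbn [fst eval].
  - split; [|tauto]. intros Hb; split; [exact Hb|].
    intros rj Hin Hov. assert (Hrj : In rj (Dset Ro Gamma r)) by (apply In_Dset; auto).
    rewrite ED in Hrj; destruct Hrj.
  - rewrite eval_bigand, <- ED. split.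
    + intros [Hb Hneg]; split; [exact Hb|]. intros rj Hin Hov.
      apply (Hneg (FNeg (body rj))), in_map_iff. exists rj; split; [reflexivity|].
      apply In_Dset; auto.
    + intros [Hb Hnot]; split; [exact Hb|]. intros g Hg.
      apply in_map_iff in Hg; destruct Hg as [rj [<- Hrj]].
      apply In_Dset in Hrj; destruct Hrj as [Hin Hov]. exact (Hnot rj Hin Hov).
Qed.

Lemma snd_translate Ro Gamma r : snd (translate Ro Gamma r) = Defs.head r.
Proof. unfold translate; destruct (Dset Ro Gamma r); reflexivity. Qed.

Lemma viol_translate Ro Gamma M w r :
  viol Ro Gamma M w r <->
  In r Ro /\ eval (val M w) (fst (translate Ro Gamma r))
          /\ ~ eval (val M w) (snd (translate Ro Gamma r)).
Proof. rewrite eval_translate_body, snd_translate. unfold viol, wsat. intuition. Qed.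

Lemma mset_eval v (H : iopair -> Prop) :
  (forall f, mset H f -> eval v f) <->
  (forall p, H p -> eval v (fst p) -> eval v (snd p)).
Proof.
  split.
  - intros Hm p Hp. exact (Hm (FImp (fst p) (snd p)) (ex_intro _ p (conj Hp eq_refl))).
  - intros Hp f [p [Hin ->]]. exact (Hp p Hin).
Qed.

(* A valuation satisfying a, C and m(H ∪ {p}) witnesses the consistency of out4p (H ∪ {p}) a ∪ C. *)
Lemma maxf_absorbs {N a C} {H : iopair -> Prop} {v} p :
  maxf N a C H -> N p ->
  eval v a -> (forall f, C f -> eval v f) -> (forall f, mset H f -> eval v f) ->
  (eval v (fst p) -> eval v (snd p)) ->
  H p.
Proof.
  intros [HN [_ Hmax]] HNp Ha HC HmH Hpv.
  apply (Hmax (fun q => H q \/ q = p)); [auto | | | auto].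
  - intros q [Hq | ->]; auto.
  - exists v. intros f [Hout | Hf]; [|exact (HC f Hf)].
    apply Hout. intros g [-> | Hg]; [exact Ha|].
    revert g Hg; apply mset_eval. intros q [Hq | ->]; [|exact Hpv].
    revert q Hq; apply mset_eval, HmH.
Qed.

Lemma geI_mset {Ro Gamma M u w} {H : iopair -> Prop} :
  (forall p, H p -> Ro_trans Ro Gamma p) ->
  geI Ro Gamma M u w ->
  (forall f, mset H f -> wsat M w f) ->
  (forall f, mset H f -> wsat M u f).
Proof.
  unfold wsat; intros HN Huw Hw. apply mset_eval.
  pose proof (proj1 (mset_eval _ _) Hw) as Hpairs.
  intros p Hp Hfst. apply NNPP; intro Hsnd.
  destruct (HN p Hp) as [r [Hr ->]].
  assert (Hvw : viol Ro Gamma M w r) by (apply Huw, viol_translate; auto).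
  apply viol_translate in Hvw; destruct Hvw as [_ [Hb Hh]].
  exact (Hh (Hpairs _ Hp Hb)).
Qed.

Theorem theorem1 :
  forall (Ro : list oblig) (Gamma : mform -> Prop) (M : model),
    replete M ->
    forall (a : form) (w : world M),
      wsat M w a ->
      (exists H : iopair -> Prop,
          maxf (Ro_trans Ro Gamma) a (fun f => f = a) H
          /\ forall f, mset H f -> wsat M w f) ->
      max_I Ro Gamma M (fun u => wsat M u a) w.
Proof.
  intros Ro Gamma M _ a w Hwa [H [Hmaxf Hw]].
  split; [exact Hwa|].
  intros u Hua Huw r Hvw. apply NNPP; intro Hvu.
  assert (Hu : forall f, mset H f -> wsat M u f)
    by exact (geI_mset (proj1 Hmaxf) Huw Hw).
  apply viol_translate in Hvw as Hvw'; destruct Hvw' as [Hr [Hb Hh]].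
  assert (Hpu : eval (val M u) (fst (translate Ro Gamma r)) ->
                eval (val M u) (snd (translate Ro Gamma r))).
  { intros Hbu. apply NNPP; intro Hhu. apply Hvu, viol_translate; auto. }
  assert (Hp : H (translate Ro Gamma r)).
  { apply (maxf_absorbs (v := val M u) _ Hmaxf); auto.
    - exists r; auto.
    - intros f ->; exact Hua. }
  exact (Hh (proj1 (mset_eval _ _) Hw _ Hp Hb)).
Qed.
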